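(* For every integer $L\geq 0$, \[ \sum_{j=-\infty}^{\infty} (-1)^j q^{j^2} \left(\frac{j+1}{3}\right) {2L \brack L+j}_{q^2} = \frac{(q^3;q^6)_L}{(q;q^2)_L}. \]
   Context: For a variable $a$ and integer $n\ge 0$, $(a;q)_n=(1-a)(1-aq)\cdots(1-aq^{n-1})$ (with $(a;q)_0=1$). The $q$-binomial coefficient is ${A \brack B}_q=\frac{(q;q)_A}{(q;q)_B(q;q)_{A-B}}$ if $0\le B\le A$ are integers, and $0$ otherwise; ${A\brack B}_{q^2}$ is the same with $q$ replaced by $q^2$. $\left(\frac{j}{3}\right)$ is the Legendre symbol modulo 3: it equals $1$ if $j\equiv 1 \pmod 3$, $-1$ if $j\equiv -1\pmod 3$, and $0$ if $3\mid j$. *)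

From HB Require Import structures.
From mathcomp Require Import all_boot all_order all_algebra.
From mathcomp Require Export fraction.
Set Implicit Arguments. Unset Strict Implicit. Unset Printing Implicit Defensive.
Import Order.TTheory GRing.Theory Num.Theory.
Local Open Scope ring_scope.

Definition qpoch (F : fieldType) (a q : F) (n : nat) : F :=
  \prod_(i < n) (1 - a * q ^+ i).

Definition qbinom (F : fieldType) (q : F) (A B : int) : F :=
  if (0 <= B) && (B <= A) then
    qpoch q q `|A|%N / (qpoch q q `|B|%N * qpoch q q `|A - B|%N)
  else 0.

Definition legendre3 (j : int) : int :=
  if (j %% 3)%Z == 1 then 1 else if (j %% 3)%Z == 2 then -1 else 0.

Definition QF : fieldType := {fraction {poly rat}}.
Definition qX : QF := @tofrac _ ('X : {poly rat}).

From mathcomp Require Import all_boot all_order all_algebra.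
From mathcomp Require Import zify ring.
Set Implicit Arguments. Unset Strict Implicit. Unset Printing Implicit Defensive.
Import GRing.Theory Num.Theory.
Local Open Scope ring_scope.

(* Put S_n(s, r) = sum_j (-1)^j q^(j^2) chi(j + r) [n, s + j]_(q^2), where chi is the
   Legendre symbol mod 3.  Expanding [2L+2, L+1] by the two q-Pascal rules and
   reindexing, each rule multiplies the weight by -u, u = q^(2L+1), and shifts chi by
   one, so S_(2L+2)(L+1, r) = (1 + u^2) S_(2L)(L, r) - u (S_(2L)(L, r+1) + S_(2L)(L, r-1)).
   As chi sums to zero over three consecutive integers, the bracket is -S_(2L)(L, r);
   hence S grows by 1 + u + u^2 = (1 - u^3)/(1 - u), the ratio of consecutive values of
   (q^3; q^6)_L / (q; q^2)_L. *)

Lemma qpoch0 (F : fieldType) (a q : F) : qpoch a q 0 = 1.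
Proof. by rewrite /qpoch big_ord0. Qed.

Lemma qpochS (F : fieldType) (a q : F) n :
  qpoch a q n.+1 = qpoch a q n * (1 - a * q ^+ n).
Proof. by rewrite /qpoch big_ord_recr. Qed.

Lemma qpoch_neq0 (F : fieldType) (a q : F) n :
  (forall i, (i < n)%N -> 1 - a * q ^+ i != 0) -> qpoch a q n != 0.
Proof. by move=> nz; apply/prodf_neq0 => i _; apply: nz. Qed.

Section QBinomial.

Variables (F : fieldType) (Q : F).
Hypothesis Q_nonroot : forall k, (0 < k)%N -> 1 - Q ^+ k != 0.
Local Notation P := (qpoch Q Q).

Lemma qfactS n : P n.+1 = P n * (1 - Q ^+ n.+1).
Proof. by rewrite qpochS exprS. Qed.

Lemma qfact_neq0 n : P n != 0.
Proof. by apply: qpoch_neq0 => i _; rewrite -exprS Q_nonroot. Qed.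

Lemma qbinomE (n k : nat) : (k <= n)%N -> qbinom Q n k = P n / (P k * P (n - k)).
Proof. by move=> kn; rewrite /qbinom ifT ?subzn //; lia. Qed.

Lemma qbinom_out n m : ~~ ((0 <= m) && (m <= n)) -> qbinom Q n m = 0.
Proof. by move=> /negbTE out; rewrite /qbinom out. Qed.

Lemma qbinom0 (n : nat) : qbinom Q n 0 = 1.
Proof. by rewrite (qbinomE (k := 0)) // qpoch0 subn0 mul1r divff ?qfact_neq0. Qed.

Lemma qbinom_sym (n : nat) m : qbinom Q n m = qbinom Q n (n%:Z - m).
Proof.
rewrite /qbinom; have -> : (0 <= n%:Z - m) && (n%:Z - m <= n) = (0 <= m) && (m <= n).
  by apply/idP/idP => /andP[? ?]; apply/andP; split; lia.
case: ifP => // _; have -> : n%:Z - (n%:Z - m) = m by lia.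
by rewrite [P `|m| * _]mulrC.
Qed.

Lemma qbinomnn (n : nat) : qbinom Q n n = 1.
Proof. by rewrite qbinom_sym subrr qbinom0. Qed.

Lemma qbinom_pascal_interior (k d : nat) :
  qbinom Q (k + d).+2 k.+1 = qbinom Q (k + d).+1 k + Q ^+ k.+1 * qbinom Q (k + d).+1 k.+1.
Proof.
rewrite !qbinomE; try lia.
have -> : ((k + d).+2 - k.+1 = d.+1)%N by lia.
have -> : ((k + d).+1 - k = d.+1)%N by lia.
have -> : ((k + d).+1 - k.+1 = d)%N by lia.
rewrite (qfactS (k + d).+1) (qfactS k) (qfactS d).
have -> : Q ^+ (k + d).+2 = Q ^+ k.+1 * Q ^+ d.+1 by rewrite -exprD addSn addnS.
by field; rewrite !qfact_neq0 !Q_nonroot.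
Qed.

Lemma qbinom_pascal (n : nat) m :
  qbinom Q n.+1 m = qbinom Q n (m - 1) + Q ^ m * qbinom Q n m.
Proof.
have [m_lt0 | ] := ltrP m 0; first by rewrite !qbinom_out ?mulr0 ?addr0 //; lia.
case: m => // -[_ | k _].
  by rewrite !qbinom0 qbinom_out ?expr0z ?mul1r ?add0r //; lia.
have -> : Posz k.+1 - 1 = k by lia.
have [kn | nk] := ltnP k n.
  have [d ->] : exists d, n = (k + d).+1 by exists (n - k.+1)%N; lia.
  exact: qbinom_pascal_interior.
rewrite [qbinom Q n k.+1]qbinom_out ?mulr0 ?addr0; last by lia.
have [-> | kn] := eqVneq k n; first by rewrite !qbinomnn.
by rewrite !qbinom_out //; lia.
Qed.

Lemma qbinom_pascal_rev (n : nat) m :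
  qbinom Q n.+1 m = Q ^ (n.+1%:Z - m) * qbinom Q n (m - 1) + qbinom Q n m.
Proof.
rewrite qbinom_sym qbinom_pascal addrC (qbinom_sym n m) (qbinom_sym n (m - 1)).
by congr (_ * qbinom _ _ _ + qbinom _ _ _); lia.
Qed.

End QBinomial.

Section WindowSum.

Variable V : zmodType.

Definition zsum (K : nat) (f : int -> V) : V := \sum_(i < (2 * K).+1) f (i%:Z - K%:Z).

Lemma eq_zsum K f g : f =1 g -> zsum K f = zsum K g.
Proof. by move=> fg; apply: eq_bigr => i _; rewrite fg. Qed.

Lemma zsumD K f g : zsum K (fun j => f j + g j) = zsum K f + zsum K g.
Proof. exact: big_split. Qed.

Lemma zsumS K f : zsum K.+1 f = f (- K.+1%:Z) + zsum K f + f K.+1%:Z.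
Proof.
rewrite /zsum (_ : (2 * K.+1).+1 = (2 * K).+3)%N; last by lia.
rewrite big_ord_recr big_ord_recl /=; congr (f _ + _ + f _); try lia.
by apply: eq_bigr => i _; congr f; rewrite /bump /=; lia.
Qed.

Lemma zsum_shiftD1 K f : zsum K (fun j => f (j + 1)) = zsum K f - f (- K%:Z) + f K.+1%:Z.
Proof.
rewrite /zsum big_ord_recr [in RHS]big_ord_recl /= addrAC.
congr (_ + f _); last by lia.
rewrite sub0r addrAC subrr add0r.
by apply: eq_bigr => i _; congr f; rewrite /bump /=; lia.
Qed.

Lemma zsum_shiftB1 K f : zsum K (fun j => f (j - 1)) = zsum K f + f (- K.+1%:Z) - f K%:Z.
Proof.
have -> : zsum K f = zsum K (fun j => f (j + 1 - 1)) by apply: eq_zsum => j; rewrite addrK.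
rewrite (zsum_shiftD1 K (fun j => f (j - 1))) (_ : - K%:Z - 1 = - K.+1%:Z); last by lia.
rewrite (_ : K.+1%:Z - 1 = K%:Z); last by lia.
by rewrite [X in X - _]addrAC subrK addrK.
Qed.

End WindowSum.

Lemma mulr_zsumr (R : pzRingType) K (c : R) f : c * zsum K f = zsum K (fun j => c * f j).
Proof. exact: mulr_sumr. Qed.

Lemma legendre3_sum3 y : legendre3 (y - 1) + legendre3 y + legendre3 (y + 1) = 0.
Proof.
rewrite /legendre3 -(modzDml y (-1)) -(modzDml y 1).
have : (0 <= y %% 3)%Z && ((y %% 3)%Z < 3) by rewrite modz_ge0 ?ltz_pmod.
move: (y %% 3)%Z => r r_range; have : [|| r == 0, r == 1 | r == 2] by lia.
by case/or3P => /eqP ->.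
Qed.

Section WeightedSum.

Variables (F : fieldType) (q : F).
Hypotheses (q_neq0 : q != 0) (q_nonroot : forall k, (0 < k)%N -> 1 - q ^+ k != 0).
Local Notation Q := (q ^+ 2).

Lemma qsqr_nonroot k : (0 < k)%N -> 1 - Q ^+ k != 0.
Proof. by move=> k_gt0; rewrite -exprM q_nonroot // muln_gt0. Qed.

Lemma qsqr_exprz z : Q ^ z = q ^ (2 * z).
Proof. by rewrite exprnP exprz_exp. Qed.

Definition chi3 (x : int) : F := (legendre3 x)%:~R.

Definition weight (r j : int) : F := (-1) ^ j * q ^ (j * j) * chi3 (j + r).

Definition binsum K (n : nat) (s r : int) : F :=
  zsum K (fun j => weight r j * qbinom Q n%:Z (s + j)).

Lemma chi3_neighbours y : chi3 (y + 1) + chi3 (y - 1) = - chi3 y.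
Proof.
rewrite /chi3 -rmorphD -rmorphN /=; congr intr.
by apply: (addIr (legendre3 y)); rewrite addNr -(legendre3_sum3 y); ring.
Qed.

Lemma binsum_neighbours K n s r :
  binsum K n s (r + 1) + binsum K n s (r - 1) = - binsum K n s r.
Proof.
rewrite /binsum -zsumD -[RHS]mulN1r mulr_zsumr; apply: eq_zsum => j.
by rewrite /weight !addrA -mulrDl -mulrDr chi3_neighbours; ring.
Qed.

Lemma weight_shiftD1 L r j :
  weight r (j + 1) * Q ^ (L%:Z - j) = - q ^+ (2 * L).+1 * weight (r + 1) j.
Proof.
have sq : q ^ ((j + 1) * (j + 1)) * Q ^ (L%:Z - j) = q ^+ (2 * L).+1 * q ^ (j * j).
  by rewrite qsqr_exprz exprnP -!expfzDr //; congr (_ ^ _); lia.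
rewrite /weight (expfzDr (x := -1)) ?oppr_eq0 ?oner_neq0 // expr1z -addrA (addrC 1 r).
set a := q ^ _ in sq *; set b := Q ^ _ in sq *.
by transitivity (- ((-1) ^ j * (a * b) * chi3 (j + (r + 1)))); [ring | rewrite sq; ring].
Qed.

Lemma weight_shiftB1 L r j :
  weight r (j - 1) * Q ^ (L%:Z + j) = - q ^+ (2 * L).+1 * weight (r - 1) j.
Proof.
have sq : q ^ ((j - 1) * (j - 1)) * Q ^ (L%:Z + j) = q ^+ (2 * L).+1 * q ^ (j * j).
  by rewrite qsqr_exprz exprnP -!expfzDr //; congr (_ ^ _); lia.
rewrite /weight (expfzDr (x := -1)) ?oppr_eq0 ?oner_neq0 // exprN1 invrN1.
rewrite -addrA (addrC (-1) r).
set a := q ^ _ in sq *; set b := Q ^ _ in sq *.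
by transitivity (- ((-1) ^ j * (a * b) * chi3 (j + (r - 1)))); [ring | rewrite sq; ring].
Qed.

(* L < K: the terms pushed across the edge of the window by reindexing vanish,
   since the q-binomial is zero there. *)
Lemma binsum_pascal_odd L K r : (L < K)%N ->
  binsum K (2 * L).+1 L r =
  binsum K (2 * L) L r - q ^+ (2 * L).+1 * binsum K (2 * L) L (r + 1).
Proof.
move=> LK; rewrite /binsum.
pose h j := weight r (j + 1) * Q ^ (L%:Z - j) * qbinom Q (2 * L)%N (L%:Z + j).
have -> : zsum K (fun j => weight r j * qbinom Q (2 * L).+1 (L%:Z + j)) =
          zsum K (fun j => h (j - 1)) +
          zsum K (fun j => weight r j * qbinom Q (2 * L)%N (L%:Z + j)).
  rewrite -zsumD; apply: eq_zsum => j.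
  rewrite /h qbinom_pascal_rev ?subrK; last exact: qsqr_nonroot.
  by rewrite mulrDr mulrA; congr (_ * Q ^ _ * qbinom _ _ _ + _); lia.
rewrite zsum_shiftB1.
have -> : h (- K.+1%:Z) = 0 by rewrite /h qbinom_out ?mulr0 //; lia.
have -> : h K%:Z = 0 by rewrite /h qbinom_out ?mulr0 //; lia.
rewrite addr0 subr0 addrC -mulNr mulr_zsumr; congr (_ + _); apply: eq_zsum => j.
by rewrite /h weight_shiftD1; ring.
Qed.

Lemma binsum_pascal_even L K r : (L < K)%N ->
  binsum K (2 * L).+2 L.+1 r =
  binsum K (2 * L).+1 L r - q ^+ (2 * L).+1 * binsum K (2 * L).+1 L (r - 1).
Proof.
move=> LK; rewrite /binsum.
pose g j := weight r (j - 1) * Q ^ (L%:Z + j) * qbinom Q (2 * L).+1 (L%:Z + j).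
have -> : zsum K (fun j => weight r j * qbinom Q (2 * L).+2 (L.+1%:Z + j)) =
          zsum K (fun j => weight r j * qbinom Q (2 * L).+1 (L%:Z + j)) +
          zsum K (fun j => g (j + 1)).
  rewrite -zsumD; apply: eq_zsum => j.
  rewrite /g qbinom_pascal ?addrK; last exact: qsqr_nonroot.
  by rewrite mulrDr mulrA; congr (_ * qbinom _ _ _ + _ * Q ^ _ * qbinom _ _ _); lia.
rewrite zsum_shiftD1.
have -> : g (- K%:Z) = 0 by rewrite /g qbinom_out ?mulr0 //; lia.
have -> : g K.+1%:Z = 0 by rewrite /g qbinom_out ?mulr0 //; lia.
rewrite addr0 subr0 -mulNr mulr_zsumr; congr (_ + _); apply: eq_zsum => j.
by rewrite /g weight_shiftB1; ring.
Qed.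

Lemma binsum_rec L K r : (L < K)%N ->
  binsum K (2 * L).+2 L.+1 r =
  (1 + q ^+ (2 * L).+1 + q ^+ (2 * L).+1 ^+ 2) * binsum K (2 * L) L r.
Proof.
move=> LK; rewrite binsum_pascal_even // !binsum_pascal_odd // subrK.
have := binsum_neighbours K (2 * L) L r.
set up := binsum _ _ _ (r + 1); set down := binsum _ _ _ (r - 1).
by move/(canRL (addKr up))->; ring.
Qed.

Lemma binsum_trim L r : binsum L.+1 (2 * L) L r = binsum L (2 * L) L r.
Proof. by rewrite /binsum zsumS !qbinom_out ?mulr0 ?add0r ?addr0 //; lia. Qed.

Lemma binsum_closed L r :
  binsum L (2 * L) L r = chi3 r * qpoch (q ^+ 3) (q ^+ 6) L / qpoch q (q ^+ 2) L.
Proof.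
elim: L => [|L IH].
  rewrite /binsum /zsum big_ord1 /weight /= subrr mulr0 !expr0z !mul1r add0r.
  by rewrite (qbinom0 qsqr_nonroot) !qpoch0 !mulr1 divr1.
rewrite (_ : 2 * L.+1 = (2 * L).+2)%N; last by lia.
rewrite binsum_rec // binsum_trim IH !qpochS.
have -> : q ^+ 3 * (q ^+ 6) ^+ L = q ^+ (2 * L).+1 ^+ 3.
  by rewrite -!exprM -exprD; congr (_ ^+ _); lia.
have -> : q * Q ^+ L = q ^+ (2 * L).+1 by rewrite -exprM -exprS.
have u_nonroot := q_nonroot (ltn0Sn (2 * L)).
have den_neq0 : qpoch q Q L != 0.
  by apply: qpoch_neq0 => i _; rewrite -exprM -exprS q_nonroot.
by field; rewrite u_nonroot den_neq0.
Qed.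

End WeightedSum.

Lemma qX_neq0 : qX != 0.
Proof. by rewrite /qX tofrac_eq0 polyX_eq0. Qed.

Lemma qX_nonroot k : (0 < k)%N -> 1 - qX ^+ k != 0.
Proof.
move=> k_gt0; rewrite subr_eq0 /qX -tofracXn -tofrac1 tofrac_eq.
apply: contraTneq k_gt0 => one_eq.
by move: (size_polyXn rat k); rewrite -one_eq size_poly1 => -[<-].
Qed.

Lemma exprN1_absz (R : unitRingType) (j : int) : (-1) ^+ `|j|%N = (-1) ^ j :> R.
Proof. by case: j => n; rewrite ?NegzE -?exprz_inv ?invrN1 exprnP. Qed.

Lemma exprz_abs_sqr (R : unitRingType) (x : R) (j : int) : x ^+ (`|j| ^ 2)%N = x ^ (j * j).
Proof. by rewrite exprnP; congr (_ ^ _); nia. Qed.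

Theorem theorem2p4 (L : nat) :
  \sum_(i < (2 * L).+1)
     (let j : int := (i%:Z - L%:Z)%R in
      (-1) ^+ `|j|%N * qX ^+ (`|j| ^ 2)%N * (legendre3 (j + 1))%:~R
      * qbinom (qX ^+ 2) (2 * L)%N%:Z (L%:Z + j))
  = qpoch (qX ^+ 3) (qX ^+ 6) L / qpoch qX (qX ^+ 2) L.
Proof.
transitivity (binsum qX L (2 * L) L 1).
  by apply: eq_bigr => i _; rewrite /weight /chi3 exprN1_absz exprz_abs_sqr.
by rewrite (binsum_closed qX_neq0 qX_nonroot) /chi3 mul1r.
Qed.
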